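(* Let $\mathbb{M}\subset\mathbb{T}^d$ be Lebesgue measurable. The set of vectors $\mathbf{a}\in\mathbb{R}^d$ generating an irrelevant direction (together with $\mathbf{0}$) is a linear subspace of $\mathbb{R}^d$. Moreover, if $0<|\mathbb{M}|<|\mathbb{T}^d|$, then at least one standard unit vector $\mathbf{e}_i$ ($1\le i\le d$) generates a relevant direction.
   Context: $\mathbb{T}^d=(\mathbb{R}/2\pi\mathbb{Z})^d$ with Lebesgue measure $|\cdot|$, $|\mathbb{T}^d|=(2\pi)^d$. For $\mathbf{a}\in\mathbb{R}^d$, $\mathbb{M}+\mathbf{a}$ is the translate of $\mathbb{M}$ (mod $2\pi$ in each coordinate), and $\Lambda_{\mathbb{M}}(\mathbf{a})=|\mathbb{M}\setminus(\mathbb{M}+\mathbf{a})|$. A vector $\mathbf{a}\in\mathbb{R}^d$ generates an irrelevant direction (with respect to $\mathbb{M}$) if $\Lambda_{\mathbb{M}}(\kappa\mathbf{a})=0$ for all $\kappa\in\mathbb{R}$; otherwise it generates a relevant direction. $\mathbf{e}_i$ denotes the $i$-th standard unit vector of $\mathbb{R}^d$. *)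

From HB Require Import structures.
From mathcomp Require Import all_boot all_order all_algebra.
From mathcomp Require Import all_classical all_reals all_analysis.
Set Implicit Arguments. Unset Strict Implicit. Unset Printing Implicit Defensive.
Import Order.TTheory GRing.Theory Num.Theory.
Local Open Scope classical_set_scope.
Local Open Scope ring_scope.

Section Torus.
Variable R : realType.

(* Iterated Lebesgue integral over R^n, points of R^n as n-tuples (which
   carry the product (Borel) sigma-algebra of mathcomp-analysis).  For
   measurable nonnegative integrands this is the integral against the
   n-dimensional Lebesgue measure (Tonelli). *)
Fixpoint iterint (n : nat) : (n.-tuple R -> \bar R) -> \bar R :=
  match n return (n.-tuple R -> \bar R) -> \bar R with
  | 0 => fun f => f [tuple]
  | n'.+1 => fun f =>
      (\int[@lebesgue_measure R]_x iterint (fun t => f (cons_tuple x t)))%E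
  end.

Definition row2tuple (d : nat) (v : 'rV[R]_d) : d.-tuple R :=
  [tuple v ord0 i | i < d].

Definition borelT (d : nat) (B : set (d.-tuple R)) : Prop := measurable B.

Definition volT (d : nat) (B : set (d.-tuple R)) : \bar R :=
  iterint (fun t => (\1_B t)%:E).

Definition leb (d : nat) (A : set 'rV[R]_d) : \bar R :=
  ereal_inf [set volT B | B in
    [set B : set (d.-tuple R) | borelT B /\ A `<=` @row2tuple d @^-1` B]].

(* Lebesgue measurability: sandwiched between Borel sets differing by a
   null set (i.e. measurable for the completed measure) *)
Definition leb_measurable (d : nat) (A : set 'rV[R]_d) : Prop :=
  exists B1 B2 : set (d.-tuple R),
    [/\ borelT B1, borelT B2,
        @row2tuple d @^-1` B1 `<=` A, A `<=` @row2tuple d @^-1` B2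
      & volT (B2 `\` B1) = 0%E].

(* the torus T^d = (R / 2 pi Z)^d, realised as the fundamental box [0, 2pi)^d *)
Definition torus (d : nat) : set 'rV[R]_d :=
  [set x | forall i : 'I_d, 0 <= x ord0 i < 2 * pi].

Definition translate (d : nat) (M : set 'rV[R]_d) (a : 'rV[R]_d) : set 'rV[R]_d :=
  [set x | torus x /\ exists2 m, M m & forall i : 'I_d,
      exists k : int, x ord0 i = m ord0 i + a ord0 i + k%:~R * (2 * pi)].

Definition Lambda (d : nat) (M : set 'rV[R]_d) (a : 'rV[R]_d) : \bar R :=
  leb (M `\` translate M a).

Definition irrelevant (d : nat) (M : set 'rV[R]_d) (a : 'rV[R]_d) : Prop :=
  forall kappa : R, Lambda M (kappa *: a) = 0%E.

Definition unitv (d : nat) (i : 'I_d) : 'rV[R]_d := delta_mx ord0 i.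

End Torus.

From HB Require Import structures.
From mathcomp Require Import all_boot all_order all_algebra.
From mathcomp Require Import all_classical all_reals all_analysis.
From mathcomp Require Import measurable_realfun.
From mathcomp Require Import ring lra.
Import Order.TTheory GRing.Theory Num.Theory.
Set Implicit Arguments. Unset Strict Implicit. Unset Printing Implicit Defensive.
Local Open Scope classical_set_scope.
Local Open Scope ring_scope.

(* Replace M by a Borel subset B of the box [0, 2pi[^d with the same measure,
   and let defect c = |B \ (B - c)|, translation being taken mod 2pi, so that
   Lambda_M(a) = defect (-a).  Translation mod 2pi preserves Lebesgue measure
   on the box, hence defect is subadditive and vanishes at 0: the irrelevant
   vectors form a subspace.  If every e_i were irrelevant, defect would vanish
   everywhere, and integrating 1_B(t) 1_B(t + s) over the box in s and t in
   both orders (Fubini) would give |B| |T^d| = |B|^2, i.e. |M| = 0 or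
   |M| = |T^d|. *)

Section iterated_integral.
Variable R : realType.
Local Open Scope ereal_scope.

Lemma measurable_cons_tuple n :
  measurable_fun setT (fun p : R * n.-tuple R => cons_tuple p.1 p.2).
Proof. exact: (measurable_cons measurable_fst measurable_snd). Qed.

Lemma measurable_cons_tuple1 n (x : R) :
  measurable_fun setT (fun t : n.-tuple R => cons_tuple x t).
Proof. exact: (measurableT_comp (@measurable_cons_tuple n) (pair1_measurable x)). Qed.

Lemma measurable_pair_cons d (T : measurableType d) n :
  measurable_fun setT (fun z : T * R * n.-tuple R => (z.1.1, cons_tuple z.1.2 z.2)).
Proof.
apply/measurable_fun_pairP; split.
  exact: (measurableT_comp measurable_fst measurable_fst).
exact: (measurable_cons (measurableT_comp measurable_snd measurable_fst)
                        measurable_snd).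
Qed.

Lemma iterint_ge0 n (f : n.-tuple R -> \bar R) :
  (forall t, 0 <= f t) -> 0 <= iterint f.
Proof.
elim: n f => [|n IH] f f0 /=; first exact: f0.
by apply: integral_ge0 => x _; apply: IH => t; exact: f0.
Qed.

Lemma measurable_iterint d (T : measurableType d) n (f : T * n.-tuple R -> \bar R) :
  measurable_fun setT f -> (forall z, 0 <= f z) ->
  measurable_fun setT (fun y => iterint (fun t => f (y, t))).
Proof.
elim: n d T f => [|n IH] d T f mf f0 /=.
  exact: (measurableT_comp mf (pair2_measurable _)).
pose g (z : T * R * n.-tuple R) := f (z.1.1, cons_tuple z.1.2 z.2).
have mg : measurable_fun setT g := measurableT_comp mf (@measurable_pair_cons _ _ n).
exact: (measurable_fun_fubini_tonelli_F (m2 := lebesgue_measure) _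
  (IH _ _ g mg (fun z => f0 _)) (fun p => iterint_ge0 (fun t => f0 _))).
Qed.

Lemma measurable_iterint_cons n (f : n.+1.-tuple R -> \bar R) :
  measurable_fun setT f -> (forall t, 0 <= f t) ->
  measurable_fun setT (fun x : R => iterint (fun t => f (cons_tuple x t))).
Proof.
move=> mf f0.
exact: (measurable_iterint (f := fun p : R * n.-tuple R => f (cons_tuple p.1 p.2))
  (measurableT_comp mf (@measurable_cons_tuple n)) (fun _ => f0 _)).
Qed.

Lemma ge0_le_iterint n (f g : n.-tuple R -> \bar R) :
  measurable_fun setT f -> measurable_fun setT g ->
  (forall t, 0 <= f t) -> (forall t, f t <= g t) -> iterint f <= iterint g.
Proof.
elim: n f g => [|n IH] f g mf mg f0 fg /=; first exact: fg.
have g0 t : 0 <= g t by exact: le_trans (f0 t) (fg t).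
apply: ge0_le_integral => //.
- by move=> x _; apply: iterint_ge0 => t; exact: f0.
- exact: measurable_iterint_cons.
- exact: measurable_iterint_cons.
- move=> x _; apply: IH => //.
  + exact: (measurableT_comp mf (@measurable_cons_tuple1 n x)).
  + exact: (measurableT_comp mg (@measurable_cons_tuple1 n x)).
Qed.

Lemma ge0_iterintD n (f g : n.-tuple R -> \bar R) :
  measurable_fun setT f -> measurable_fun setT g ->
  (forall t, 0 <= f t) -> (forall t, 0 <= g t) ->
  iterint (fun t => f t + g t) = iterint f + iterint g.
Proof.
elim: n f g => [|n IH] f g mf mg f0 g0 //=.
rewrite -ge0_integralD //.
- apply: eq_integral => x _; apply: IH => //.
  + exact: (measurableT_comp mf (@measurable_cons_tuple1 n x)).
  + exact: (measurableT_comp mg (@measurable_cons_tuple1 n x)).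
- by move=> x _; apply: iterint_ge0 => t; exact: f0.
- exact: measurable_iterint_cons.
- by move=> x _; apply: iterint_ge0 => t; exact: g0.
- exact: measurable_iterint_cons.
Qed.

Lemma ge0_iterintZl n (f : n.-tuple R -> \bar R) (k : \bar R) :
  measurable_fun setT f -> (forall t, 0 <= f t) -> 0 <= k ->
  iterint (fun t => k * f t) = k * iterint f.
Proof.
elim: n f => [|n IH] f mf f0 k0 //=.
rewrite -ge0_integralZl //.
- apply: eq_integral => x _; apply: IH => //.
  exact: (measurableT_comp mf (@measurable_cons_tuple1 n x)).
- exact: measurable_iterint_cons.
- by move=> x _; apply: iterint_ge0 => t; exact: f0.
Qed.

Lemma iterint0 n : iterint (fun t : n.-tuple R => 0) = 0.
Proof.
elim: n => [|n IH] //=.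
by rewrite (eq_integral (cst 0)) ?integral0 // => x _; exact: IH.
Qed.

Lemma integral_iterint_swap n (G : R * n.-tuple R -> \bar R) :
  measurable_fun setT G -> (forall z, 0 <= G z) ->
  \int[lebesgue_measure]_y iterint (fun t => G (y, t)) =
  iterint (fun t => \int[lebesgue_measure]_y G (y, t)).
Proof.
elim: n G => [|n IH] G mG G0 //=.
pose g (z : R * R * n.-tuple R) := G (z.1.1, cons_tuple z.1.2 z.2).
have mg : measurable_fun setT g := measurableT_comp mG (@measurable_pair_cons _ _ n).
rewrite (fubini_tonelli (m1 := lebesgue_measure) (m2 := lebesgue_measure) _
  (measurable_iterint mg (fun z => G0 _)) (fun p => iterint_ge0 (fun t => G0 _))) /=.
apply: eq_integral => x _.
have mGx : measurable_fun setT
    (fun p : R * n.-tuple R => G (p.1, cons_tuple x p.2)).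
  apply: (measurableT_comp mG); apply/measurable_fun_pairP; split.
    exact: measurable_fst.
  exact: (measurableT_comp (@measurable_cons_tuple1 n x) measurable_snd).
exact: (IH _ mGx (fun _ => G0 _)).
Qed.

Lemma iterint_swap m n (F : m.-tuple R * n.-tuple R -> \bar R) :
  measurable_fun setT F -> (forall z, 0 <= F z) ->
  iterint (fun s => iterint (fun t => F (s, t))) =
  iterint (fun t => iterint (fun s => F (s, t))).
Proof.
elim: m F => [|m IH] F mF F0 //=.
transitivity (\int[lebesgue_measure]_x
   iterint (fun t => iterint (fun s => F (cons_tuple x s, t)))).
  apply: eq_integral => x _.
  have mFx : measurable_fun setT
      (fun p : m.-tuple R * n.-tuple R => F (cons_tuple x p.1, p.2)).
    apply: (measurableT_comp mF); apply/measurable_fun_pairP; split.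
      exact: (measurableT_comp (@measurable_cons_tuple1 m x) measurable_fst).
    exact: measurable_snd.
  exact: (IH _ mFx (fun _ => F0 _)).
pose F' (z : (R * n.-tuple R) * m.-tuple R) := F (cons_tuple z.1.1 z.2, z.1.2).
have mF' : measurable_fun setT F'.
  apply: (measurableT_comp mF); apply/measurable_fun_pairP; split.
    exact: (measurable_cons (measurableT_comp measurable_fst measurable_fst)
                            measurable_snd).
  exact: (measurableT_comp measurable_snd measurable_fst).
exact: (integral_iterint_swap (measurable_iterint mF' (fun _ => F0 _))
  (fun p => iterint_ge0 (fun s => F0 _))).
Qed.

End iterated_integral.

Section lebesgue_measure_shift.
Variables (R : realType) (s : R).
Local Open Scope ereal_scope.
Let phi (x : R) := (x + s)%R.
Let mphi : measurable_fun setT phi. Proof. exact: measurable_funD. Qed.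

Let shift_measure : set (measurableTypeR R) -> \bar R :=
  fun A => lebesgue_measure (phi @^-1` A).

Let shift_measure0 : shift_measure set0 = 0.
Proof. by rewrite /shift_measure preimage_set0 measure0. Qed.

Let shift_measure_ge0 A : 0 <= shift_measure A.
Proof. exact: measure_ge0. Qed.

Let shift_measure_sigma_additive : semi_sigma_additive shift_measure.
Proof.
move=> F mF tF mUF; rewrite /shift_measure preimage_bigcup.
apply: measure_semi_sigma_additive.
- by move=> n; rewrite -[X in measurable X]setTI; apply: mphi => //; exact: mF.
- apply/trivIsetP => /= i j _ _ ij; rewrite -preimage_setI.
  by move/trivIsetP : tF => /(_ _ _ _ _ ij) ->//; rewrite preimage_set0.
- by rewrite -preimage_bigcup -[X in measurable X]setTI; apply: mphi.
Qed.

HB.instance Definition _ := isMeasure.Build _ _ _ shift_measure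
  shift_measure0 shift_measure_ge0 shift_measure_sigma_additive.

Lemma lebesgue_measure_shift (A : set R) : measurable A ->
  lebesgue_measure ((fun x => x + s)%R @^-1` A) = lebesgue_measure A.
Proof.
move=> mA; apply/esym; apply: (@lebesgue_measure_unique R shift_measure) => //.
move=> X [[a b] _ <-] /=; rewrite /shift_measure.
have -> : phi @^-1` `]a, b]%classic = `](a - s)%R, (b - s)%R]%classic.
  apply/seteqP; split => x /=; rewrite !in_itv /= /phi.
    by move=> /andP[h1 h2]; rewrite ltrBlDr lerBrDr h1 h2.
  by move=> /andP[h1 h2]; rewrite -ltrBlDr -lerBrDr h1 h2.
rewrite !lebesgue_measure_itv /= !lte_fin ltrD2r.
by case: ifPn => // _; congr (_%:E); lra.
Qed.

Lemma ge0_integral_shift (h : R -> \bar R) :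
  measurable_fun setT h -> (forall x, 0 <= h x) ->
  \int[lebesgue_measure]_x h (x + s)%R = \int[lebesgue_measure]_x h x.
Proof.
move=> mh h0.
pose psi (x : measurableTypeR R) : measurableTypeR R := (x + s)%R.
have := @ge0_integral_pushforward _ _ _ _ R psi mphi lebesgue_measure setT h
  measurableT mh (fun y _ => h0 y).
rewrite preimage_setT => <-.
by apply: eq_measure_integral => A mA _; exact: lebesgue_measure_shift.
Qed.

End lebesgue_measure_shift.

Section modtau.
Variable R : realType.

(* A constant rather than a notation: rewriting with distributivity would
   otherwise split [2 * pi] into [pi + pi]. *)
Definition tau : R := 2 * pi.

Lemma tau_gt0 : 0 < tau.
Proof. by rewrite mulr_gt0 // pi_gt0. Qed.

Definition modtau (y : R) : R := y - tau * (Num.floor (y / tau))%:~R.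

Lemma modtau_eq y : y = modtau y + (Num.floor (y / tau))%:~R * tau.
Proof. by rewrite /modtau mulrC subrK. Qed.

Lemma modtau_itv y : 0 <= modtau y < tau.
Proof.
have tau0 := tau_gt0.
have /andP[h1 h2] := floor_itv (y / tau).
have e : y = (y / tau) * tau by rewrite mulfVK ?gt_eqF.
rewrite intrD in h2; move: h1 h2; rewrite /modtau.
set q := y / tau; set f := (Num.floor q)%:~R; move: e => -> h1 h2.
by rewrite -/q; apply/andP; split; nra.
Qed.

Lemma modtau_id y : 0 <= y < tau -> modtau y = y.
Proof.
move=> /andP[y0 ytau]; have tau0 := tau_gt0.
rewrite /modtau (_ : Num.floor (y / tau) = 0) ?mulr0 ?subr0 //.
apply: floor_def; rewrite add0r divr_ge0 ?(ltW tau0) //=.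
by rewrite ltr_pdivrMr // mul1r.
Qed.

Lemma modtauDz y (k : int) : modtau (y + k%:~R * tau) = modtau y.
Proof.
have tau0 := tau_gt0.
rewrite /modtau mulrDl mulfK ?gt_eqF // floorDrz ?intr_int // intrKfloor intrD.
by rewrite mulrDr; lra.
Qed.

Lemma modtauDml y z : modtau (modtau y + z) = modtau (y + z).
Proof.
rewrite [in RHS](_ : y + z = modtau y + z + (Num.floor (y / tau))%:~R * tau).
  by rewrite modtauDz.
by rewrite {1}(modtau_eq y); ring.
Qed.

Lemma measurable_modtau : measurable_fun setT modtau.
Proof.
apply: measurable_funB => //; apply: measurable_funM => //.
apply: (@nondecreasing_measurable R setT (fun y => (Num.floor (y / tau))%:~R))
  => // a b ab.
by rewrite ler_int le_floor // ler_pM2r // invr_gt0 tau_gt0.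
Qed.

End modtau.
Arguments tau {R}.

Section integral_period.
Variable R : realType.
Local Open Scope ereal_scope.

Definition coitv_ind (a b x : R) : \bar R := (\1_(`[a, b[%classic) x)%:E.

Lemma coitv_indE a b x :
  coitv_ind a b x = if (a <= x)%R && (x < b)%R then 1 else 0.
Proof.
rewrite /coitv_ind indicE.
have -> : (x \in `[a, b[%classic) = (a <= x < b)%R.
  by apply/idP/idP => [/set_mem /=|h]; rewrite ?in_itv //; apply/mem_set.
by case: ifPn.
Qed.

Lemma coitv_ind_ge0 a b x : 0 <= coitv_ind a b x.
Proof. by rewrite coitv_indE; case: ifPn. Qed.

Lemma measurable_coitv_ind a b : measurable_fun setT (coitv_ind a b).
Proof. exact/measurable_EFinP/measurable_indic. Qed.

Lemma coitv_indD a b s y :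
  coitv_ind a b y = coitv_ind (a + s)%R (b + s)%R (y + s)%R.
Proof. by rewrite !coitv_indE lerD2r ltrD2r. Qed.

Lemma coitv_ind_split (G : R -> \bar R) (a b c y : R) : (a <= b)%R -> (b <= c)%R ->
  coitv_ind a b y * G y + coitv_ind b c y * G y = coitv_ind a c y * G y.
Proof.
move=> ab bc; rewrite !coitv_indE.
case: (leP a y) => h1; case: (ltP y b) => h2; case: (leP b y) => h3;
  case: (ltP y c) => h4 /=; rewrite ?mul1e ?mul0e ?adde0 ?add0e //; exfalso; lra.
Qed.

(* Cut [0, tau[ at tau - modtau c: on each piece the wrapped translation is an
   ordinary translation, by modtau c and by modtau c - tau respectively. *)
Lemma integral_period_modtauD (G : R -> \bar R) (c : R) :
  measurable_fun setT G -> (forall x, 0 <= G x) ->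
  \int[lebesgue_measure]_x (coitv_ind 0 tau x * G (modtau (x + c)%R)) =
  \int[lebesgue_measure]_x (coitv_ind 0 tau x * G x).
Proof.
move=> mG G0; have tau0 := @tau_gt0 R.
have /andP[c'0 c'tau] := modtau_itv c; set c' := modtau c in c'0 c'tau *.
have cut x : coitv_ind 0 tau x * G (modtau (x + c)%R) =
   coitv_ind 0 (tau - c')%R x * G (x + c')%R
   + coitv_ind (tau - c')%R tau x * G (x + (c' - tau))%R.
  have -> : modtau (x + c) = modtau (x + c') by rewrite [in RHS]addrC modtauDml addrC.
  rewrite !coitv_indE.
  case: (leP 0%R x) => h1; case: (ltP x (tau - c')%R) => h2;
    case: (leP (tau - c')%R x) => h3; case: (ltP x tau) => h4 /=;
    rewrite ?mul1e ?mul0e ?adde0 ?add0e //; try (exfalso; lra).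
  - by rewrite modtau_id //; apply/andP; split; lra.
  - have -> : (x + c' = x + (c' - tau) + 1%:~R * tau)%R by rewrite mul1r -addrA subrK.
    by rewrite modtauDz modtau_id //; apply/andP; split; lra.
have mI a b s : measurable_fun setT (fun x => coitv_ind a b x * G (x + s)%R).
  apply: emeasurable_funM; first exact: measurable_coitv_ind.
  exact: (measurableT_comp mG (measurable_funD _ _)).
have I0 a b s x : 0 <= coitv_ind a b x * G (x + s)%R.
  by apply: mule_ge0; [exact: coitv_ind_ge0|exact: G0].
have mH a b : measurable_fun setT (fun y => coitv_ind a b y * G y).
  by apply: emeasurable_funM => //; exact: measurable_coitv_ind.
have H0 a b y : 0 <= coitv_ind a b y * G y.
  by apply: mule_ge0; [exact: coitv_ind_ge0|exact: G0].
have shift a b u : \int[lebesgue_measure]_x (coitv_ind a b x * G (x + u)%R) =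
    \int[lebesgue_measure]_x (coitv_ind (a + u)%R (b + u)%R x * G x).
  rewrite -(ge0_integral_shift u (mH _ _) (H0 _ _)).
  by apply: eq_integral => x _; rewrite -coitv_indD.
under eq_integral => x _ do rewrite cut.
rewrite ge0_integralD //; try (by move=> x _; exact: I0); try exact: mI.
rewrite !shift add0r addeC.
have [-> -> ->] : [/\ (tau - c' + c' = tau)%R, (tau - c' + (c' - tau) = 0)%R
                   & (tau + (c' - tau) = c')%R] by split; lra.
rewrite -ge0_integralD //; try (by move=> x _; exact: H0); try exact: mH.
by apply: eq_integral => x _; apply: coitv_ind_split; lra.
Qed.
End integral_period.

Section EFin_indic.
Variables (R : realType) (T : Type).
Local Open Scope ereal_scope.
Implicit Types A B : set T.

Lemma EFin_indic1 A x : A x -> (\1_A x)%:E = 1 :> \bar R.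
Proof. by move=> Ax; rewrite indicE mem_set. Qed.

Lemma EFin_indic0 A x : ~ A x -> (\1_A x)%:E = 0 :> \bar R.
Proof. by move=> Ax; rewrite indicE memNset. Qed.

Lemma EFin_indic_ge0 A x : 0 <= (\1_A x)%:E :> \bar R.
Proof. by rewrite lee_fin indicE. Qed.

Lemma EFin_indicI A B x :
  (\1_(A `&` B) x)%:E = (\1_A x)%:E * (\1_B x)%:E :> \bar R.
Proof. by rewrite indicI -EFinM. Qed.

End EFin_indic.

Section torus_shift.
Variable R : realType.
Local Open Scope ereal_scope.
Implicit Types n : nat.

Definition tshift n (c t : n.-tuple R) : n.-tuple R :=
  [tuple modtau (tnth t i + tnth c i)%R | i < n].

Definition box n : set (n.-tuple R) := [set t | forall i, (0 <= tnth t i < tau)%R].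

Definition box_ind n (t : n.-tuple R) : \bar R := (\1_(@box n) t)%:E.

Lemma tnth_tshift n (c t : n.-tuple R) i :
  tnth (tshift c t) i = modtau (tnth t i + tnth c i)%R.
Proof. exact: tnth_mktuple. Qed.

Lemma tshiftC n (c t : n.-tuple R) : tshift c t = tshift t c.
Proof. by apply: eq_from_tnth => i; rewrite !tnth_tshift addrC. Qed.

Lemma tshift_cons n (x y : R) (c t : n.-tuple R) :
  tshift (cons_tuple x c) (cons_tuple y t) = cons_tuple (modtau (y + x)%R) (tshift c t).
Proof.
apply: eq_from_tnth => i; rewrite tnth_tshift.
by case: (unliftP ord0 i) => [j ->|->]; rewrite ?tnthS ?tnth0 ?tnth_tshift.
Qed.

Lemma box_cons n (y : R) (t : n.-tuple R) :
  box (cons_tuple y t) <-> (0 <= y < tau)%R /\ box t.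
Proof.
split => [h|[hy ht] i]; first by split=> [|i]; [move: (h ord0)|move: (h (lift ord0 i))];
  rewrite ?tnth0 ?tnthS.
by case: (unliftP ord0 i) => [j ->|->]; rewrite ?tnthS ?tnth0.
Qed.

Lemma box_ind_cons n (y : R) (t : n.-tuple R) :
  box_ind (cons_tuple y t) = coitv_ind 0 tau y * box_ind t.
Proof.
rewrite /box_ind coitv_indE; have [hy|hy] := boolP (0 <= y < tau)%R.
  have [ht|ht] := pselect (box t).
    by rewrite !EFin_indic1 ?mul1e //; apply/box_cons.
  by rewrite !EFin_indic0 ?mule0 // => /box_cons[].
by rewrite mul0e EFin_indic0 // => /box_cons[yb _]; rewrite yb in hy.
Qed.

Lemma box_ind_ge0 n (t : n.-tuple R) : 0 <= box_ind t.
Proof. exact: EFin_indic_ge0. Qed.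

Lemma measurable_box n : measurable (@box n).
Proof.
have -> : @box n = \bigcap_(i in setT) ((fun t => tnth t i) @^-1` `[0%R, tau[%classic).
  apply/seteqP; split => t /= h i; first by move=> _ /=; rewrite in_itv; exact: h.
  by have := h i I; rewrite /= in_itv.
apply: fin_bigcap_measurable; first exact: finite_finset.
by move=> i _; rewrite -[X in measurable X]setTI; exact: measurable_tnth.
Qed.

Lemma measurable_box_ind n : measurable_fun setT (@box_ind n).
Proof. by apply/measurable_EFinP/measurable_indic; exact: measurable_box. Qed.

Lemma measurable_tshift2 n :
  measurable_fun setT (fun p : n.-tuple R * n.-tuple R => tshift p.1 p.2).
Proof.
apply/measurable_fun_tnthP => i.
rewrite (_ : _ \o _ = fun p => modtau (tnth p.2 i + tnth p.1 i)%R); last first.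
  by apply/funext => p /=; rewrite tnth_tshift.
apply: (measurableT_comp (@measurable_modtau R)); apply: measurable_funD.
  exact: (measurableT_comp (measurable_tnth i) measurable_snd).
exact: (measurableT_comp (measurable_tnth i) measurable_fst).
Qed.

Lemma measurable_tshift n (c : n.-tuple R) : measurable_fun setT (tshift c).
Proof. exact: (measurableT_comp (@measurable_tshift2 n) (pair1_measurable c)). Qed.

Lemma measurable_preimage_tshift n (c : n.-tuple R) (E : set (n.-tuple R)) :
  measurable E -> measurable (tshift c @^-1` E).
Proof. by move=> mE; rewrite -[X in measurable X]setTI; exact: measurable_tshift. Qed.

Lemma iterint_box_tshift n (c : n.-tuple R) (f : n.-tuple R -> \bar R) :
  measurable_fun setT f -> (forall t, 0 <= f t) ->
  iterint (fun t => box_ind t * f (tshift c t)) = iterint (fun t => box_ind t * f t).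
Proof.
elim: n c f => [|n IH] c f mf f0; first by rewrite /= (tuple0 (tshift c [tuple])).
case/tupleP: c => x c /=.
pose g (z : R * n.-tuple R) := box_ind z.2 * f (cons_tuple z.1 z.2).
have mg : measurable_fun setT g.
  apply: emeasurable_funM.
    exact: (measurableT_comp (@measurable_box_ind n) measurable_snd).
  exact: (measurableT_comp mf (@measurable_cons_tuple R n)).
have g0 z : 0 <= g z by apply: mule_ge0; [exact: box_ind_ge0|exact: f0].
have mfy y : measurable_fun setT (fun t => f (cons_tuple y t)).
  exact: (measurableT_comp mf (@measurable_cons_tuple1 R n _)).
pose G (y : R) := iterint (fun t => g (y, t)).
transitivity (\int[lebesgue_measure]_y (coitv_ind 0 tau y * G (modtau (y + x)%R))).
  apply: eq_integral => y _.
  rewrite (_ : (fun t => _) = fun t => coitv_ind 0 tau y *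
      (box_ind t * f (cons_tuple (modtau (y + x)%R) (tshift c t)))); last first.
    by apply/funext => t; rewrite box_ind_cons (tshift_cons x y c t) muleA.
  rewrite ge0_iterintZl ?coitv_ind_ge0 //.
  - by rewrite (IH c _ (mfy _)).
  - apply: emeasurable_funM; first exact: measurable_box_ind.
    exact: (measurableT_comp (mfy _) (measurable_tshift c)).
  - by move=> t; apply: mule_ge0; [exact: box_ind_ge0|exact: f0].
rewrite integral_period_modtauD; [|exact: measurable_iterint|by move=> ?; exact: iterint_ge0].
apply: eq_integral => y _; rewrite /G /g /= -ge0_iterintZl ?coitv_ind_ge0 //.
- by congr iterint; apply/funext => t; rewrite box_ind_cons muleA.
- exact: (measurableT_comp mg (pair1_measurable y)).
- by move=> t; apply: mule_ge0; [exact: box_ind_ge0|exact: f0].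
Qed.

End torus_shift.
Arguments box {R n}.

Section volT.
Variables (R : realType) (n : nat).
Local Open Scope ereal_scope.
Implicit Types A B E N : set (n.-tuple R).

Lemma measurable_EFin_indic A :
  measurable A -> measurable_fun setT (fun t => (\1_A t)%:E : \bar R).
Proof. by move=> mA; apply/measurable_EFinP; exact: measurable_indic. Qed.

Lemma volT_ge0 A : 0 <= volT A.
Proof. by apply: iterint_ge0 => t; exact: EFin_indic_ge0. Qed.

Lemma volT0 : volT (set0 : set (n.-tuple R)) = 0.
Proof.
rewrite /volT -(@iterint0 R n); congr iterint; apply/funext => t.
by rewrite EFin_indic0.
Qed.

Lemma le_volT A B : measurable A -> measurable B -> A `<=` B -> volT A <= volT B.
Proof.
move=> mA mB AB; apply: ge0_le_iterint; try exact: measurable_EFin_indic.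
  exact: EFin_indic_ge0.
move=> t; have [At|nAt] := pselect (A t); first by rewrite !EFin_indic1 //; exact: AB.
by rewrite EFin_indic0 //; exact: EFin_indic_ge0.
Qed.

Lemma le_volTU A B : measurable A -> measurable B ->
  volT (A `|` B) <= volT A + volT B.
Proof.
move=> mA mB; rewrite /volT -ge0_iterintD; try exact: measurable_EFin_indic;
  try exact: EFin_indic_ge0.
apply: ge0_le_iterint.
- by apply: measurable_EFin_indic; exact: measurableU.
- exact: emeasurable_funD (measurable_EFin_indic mA) (measurable_EFin_indic mB).
- exact: EFin_indic_ge0.
move=> t; have [At|nAt] := pselect (A t).
  by rewrite (EFin_indic1 R At) EFin_indic1 ?leeDl ?EFin_indic_ge0 //; left.
have [Bt|nBt] := pselect (B t).
  by rewrite (EFin_indic1 R Bt) EFin_indic1 ?leeDr ?EFin_indic_ge0 //; right.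
by rewrite EFin_indic0 ?adde_ge0 ?EFin_indic_ge0 // => -[].
Qed.

Lemma le_volT_null A B N : measurable A -> measurable B -> measurable N ->
  A `<=` B `|` N -> volT N = 0 -> volT A <= volT B.
Proof.
move=> mA mB mN ABN N0; apply: (@le_trans _ _ (volT (B `|` N))).
  by apply: le_volT => //; exact: measurableU.
by rewrite -[volT B]adde0 -N0; exact: le_volTU.
Qed.

Lemma volTID B E : measurable B -> measurable E ->
  volT B = volT (B `&` E) + volT (B `\` E).
Proof.
move=> mB mE; rewrite /volT -ge0_iterintD; try exact: EFin_indic_ge0; last first.
- by apply: measurable_EFin_indic; exact: measurableD.
- by apply: measurable_EFin_indic; exact: measurableI.
congr iterint; apply/funext => t.
have [Bt|nBt] := pselect (B t); last by rewrite !EFin_indic0 ?adde0 // => -[].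
have [Et|nEt] := pselect (E t).
  rewrite (EFin_indic1 R Bt) (@EFin_indic1 R _ (B `&` E)) //.
  by rewrite (@EFin_indic0 R _ (B `\` E)) ?adde0 // => -[].
by rewrite (@EFin_indic0 R _ (B `&` E)) ?add0e ?EFin_indic1 // => -[].
Qed.

Lemma volT_box_preimage_tshift (c : n.-tuple R) E : measurable E ->
  volT (box `&` tshift c @^-1` E) = volT (box `&` E).
Proof.
move=> mE; rewrite /volT.
have boxI F : (fun t => (\1_(box `&` F) t)%:E) = fun t => box_ind t * (\1_F t)%:E.
  by apply/funext => t; rewrite EFin_indicI.
rewrite !boxI -(iterint_box_tshift c (measurable_EFin_indic mE) (EFin_indic_ge0 R E)).
by congr iterint; apply/funext => t; rewrite !indicE.
Qed.

Lemma volT_box : volT (@box R n) = (tau ^+ n)%:E.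
Proof.
rewrite /volT; elim: n => [|m IH] /=; first by rewrite EFin_indic1 // => -[].
transitivity (\int[lebesgue_measure]_y ((tau ^+ m)%:E * coitv_ind 0 tau y) : \bar R).
  apply: eq_integral => y _.
  rewrite (_ : (fun t => _) = fun t => coitv_ind 0 tau y * box_ind t); last first.
    by apply/funext => t; rewrite -box_ind_cons.
  rewrite ge0_iterintZl ?coitv_ind_ge0 //; last 2 first.
  - exact: measurable_box_ind.
  - exact: box_ind_ge0.
  by rewrite muleC; congr (_ * _); exact: IH.
rewrite ge0_integralZl //; last 3 first.
- exact: measurable_coitv_ind.
- by move=> y _; exact: coitv_ind_ge0.
- by rewrite lee_fin exprn_ge0 // ltW // tau_gt0.
rewrite /coitv_ind integral_indic // setIT exprSr EFinM; congr (_ * _).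
by have := @lebesgue_measure_itv R `[0%R, tau[; rewrite /= lte_fin tau_gt0 oppr0 adde0.
Qed.

End volT.

Section torus.
Variables (R : realType) (d : nat).
Local Open Scope ereal_scope.
Local Notation rt := (@row2tuple R d).
Local Notation torus := (@torus R d).

Definition tuple2row (t : d.-tuple R) : 'rV[R]_d := \row_i tnth t i.

Lemma tnth_row2tuple x i : tnth (rt x) i = x ord0 i.
Proof. exact: tnth_mktuple. Qed.

Lemma tuple2rowK : cancel tuple2row rt.
Proof. by move=> t; apply: eq_from_tnth => i; rewrite tnth_row2tuple mxE. Qed.

Lemma torus_box x : torus x <-> box (rt x).
Proof. by split => h i; move: (h i); rewrite tnth_row2tuple. Qed.

Lemma leb_sandwich (X : set 'rV[R]_d) (P Q : set (d.-tuple R)) :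
  measurable P -> measurable Q -> rt @^-1` P `<=` X -> X `<=` rt @^-1` Q ->
  volT (Q `\` P) = 0 -> leb X = volT P.
Proof.
move=> mP mQ PX XQ QP0; apply/le_anti/andP; split.
  apply: le_trans (_ : volT Q <= _); first by apply: ereal_inf_lbound; exists Q.
  apply: le_volT_null QP0 => //; first exact: measurableD.
  by move=> t Qt; have [Pt|nPt] := pselect (P t); [left|right].
apply: le_ereal_inf_tmp => _ [C [mC XC] <-]; apply: le_volT => // t Pt.
have /XC : X (tuple2row t) by apply: PX; rewrite /= tuple2rowK.
by rewrite /= tuple2rowK.
Qed.

Lemma leb_torus : leb torus = (tau ^+ d)%:E.
Proof.
rewrite -volT_box; apply: leb_sandwich; try exact: measurable_box.
- by move=> x /torus_box.
- by move=> x /torus_box.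
- by rewrite setDv volT0.
Qed.

Lemma translateE (M : set 'rV[R]_d) a x : M `<=` torus ->
  translate M a x <-> box (rt x) /\ exists2 m, M m & tshift (rt (- a)) (rt x) = rt m.
Proof.
move=> MT; split.
  move=> [tx [m Mm hk]]; split; first exact/torus_box.
  exists m => //; apply: eq_from_tnth => i.
  rewrite tnth_tshift !tnth_row2tuple mxE; have [k ->] := hk i.
  rewrite (_ : (_ + _ - _ = m ord0 i + k%:~R * tau)%R); last by rewrite /tau; ring.
  by rewrite modtauDz modtau_id //; exact: (MT m Mm i).
move=> [bx [m Mm e]]; split; first exact/torus_box.
exists m => // i; exists (Num.floor ((x ord0 i - a ord0 i) / tau)).
move/(congr1 (fun t => tnth t i)): e; rewrite /= tnth_tshift !tnth_row2tuple mxE => <-.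
by have := modtau_eq (x ord0 i - a ord0 i); rewrite /tau; lra.
Qed.

Lemma tshift_row0 t : box t -> tshift (rt 0) t = t.
Proof.
move=> bt; apply: eq_from_tnth => i.
by rewrite tnth_tshift tnth_row2tuple mxE addr0 modtau_id.
Qed.

Lemma tshift_rowD u v t : tshift (rt u) (tshift (rt v) t) = tshift (rt (u + v)) t.
Proof.
apply: eq_from_tnth => i; rewrite !tnth_tshift !tnth_row2tuple mxE modtauDml.
by rewrite -addrA [(v _ _ + _)%R]addrC.
Qed.

Section defect.
Variables (B : set (d.-tuple R)) (mB : measurable B) (Bbox : B `<=` box).

Definition defect (c : 'rV[R]_d) : \bar R := volT (B `\` tshift (rt c) @^-1` B).

Let mBD c : measurable (B `\` tshift (rt c) @^-1` B).
Proof. by apply: measurableD => //; exact: measurable_preimage_tshift. Qed.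

Lemma defect_ge0 c : 0 <= defect c.
Proof. exact: volT_ge0. Qed.

Lemma defect0 : defect 0 = 0.
Proof.
rewrite /defect (_ : _ `\` _ = set0) ?volT0 //.
by apply/seteqP; split => // t [Bt]; apply; rewrite /= tshift_row0 //; exact: Bbox.
Qed.

(* A point of B leaving B under the shift by u + v leaves it under the shift
   by v, or its image in B leaves B under the shift by u; the shift by v
   preserves volume on the box. *)
Lemma defectD u v : defect (u + v) <= defect u + defect v.
Proof.
have BDbox : box `&` (B `\` tshift (rt u) @^-1` B) = B `\` tshift (rt u) @^-1` B.
  by apply/seteqP; split => t; [case|move=> [Bt ?]; split => //; exact: Bbox].
rewrite /defect addeC -BDbox -(volT_box_preimage_tshift (rt v)) //.
apply: le_trans (le_volTU _ _); [|exact: mBD|].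
- apply: le_volT; [exact: mBD|apply: measurableU; first exact: mBD|].
  + by apply: measurableI; [exact: measurable_box|exact: measurable_preimage_tshift].
  move=> t [Bt nBt]; have [Bvt|nBvt] := pselect (B (tshift (rt v) t)); last by left.
  by right; split; [exact: Bbox|split; rewrite //= tshift_rowD].
- by apply: measurableI; [exact: measurable_box|exact: measurable_preimage_tshift].
Qed.

Let mIB : measurable_fun setT (fun t => (\1_B t)%:E : \bar R).
Proof. exact: measurable_EFin_indic. Qed.

Let iterint_indicB_tshift s : defect (tuple2row s) = 0 ->
  iterint (fun t => (\1_B t)%:E * (\1_B (tshift s t))%:E) = volT B.
Proof.
rewrite /defect tuple2rowK => D0.
rewrite (volTID mB (measurable_preimage_tshift s mB)) D0 adde0 /volT.
by congr iterint; apply/funext => t; rewrite EFin_indicI.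
Qed.

Let iterint_box_indicB_tshift t :
  iterint (fun s => box_ind s * (\1_B (tshift s t))%:E) = volT B.
Proof.
rewrite (_ : (fun s => _) = fun s => box_ind s * (\1_B (tshift t s))%:E); last first.
  by apply/funext => s; rewrite tshiftC.
rewrite (iterint_box_tshift t mIB (EFin_indic_ge0 R B)).
rewrite [in RHS](_ : B = box `&` B); last first.
  by apply/seteqP; split => [u Bu|u []//]; split => //; exact: Bbox.
by rewrite /volT; congr iterint; apply/funext => u; rewrite EFin_indicI.
Qed.

(* Integrate [box s * 1_B t * 1_B (t + s)] over (s, t) in both orders. *)
Lemma volTM_box_of_defect0 : (forall c, defect c = 0) ->
  volT B * volT (@box R d) = volT B * volT B.
Proof.
move=> defect_eq0.
pose F (p : d.-tuple R * d.-tuple R) :=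
  box_ind p.1 * ((\1_B p.2)%:E * (\1_B (tshift p.1 p.2))%:E).
have mF : measurable_fun setT F.
  apply: emeasurable_funM.
    exact: (measurableT_comp (@measurable_box_ind R d) measurable_fst).
  apply: emeasurable_funM; first exact: (measurableT_comp mIB measurable_snd).
  exact: (measurableT_comp mIB (@measurable_tshift2 R d)).
have F0 p : 0 <= F p.
  by apply: mule_ge0; [exact: box_ind_ge0|apply: mule_ge0; exact: EFin_indic_ge0].
have lhs : iterint (fun s => iterint (fun t => F (s, t))) = volT B * volT (@box R d).
  transitivity (iterint (fun s : d.-tuple R => volT B * box_ind s)).
    apply: congr1; apply/funext => s; rewrite /F /= ge0_iterintZl ?box_ind_ge0 //.
      by rewrite (iterint_indicB_tshift (defect_eq0 _)) muleC.
    exact: emeasurable_funM mIB (measurableT_comp mIB (measurable_tshift s)).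
  by rewrite ge0_iterintZl ?volT_ge0 //; [exact: measurable_box_ind|exact: box_ind_ge0].
have rhs : iterint (fun t => iterint (fun s => F (s, t))) = volT B * volT B.
  transitivity (iterint (fun t => volT B * (\1_B t)%:E)).
    apply: congr1; apply/funext => t; rewrite /F /=.
    transitivity (iterint (fun s =>
        (\1_B t)%:E * (box_ind s * (\1_B (tshift s t))%:E))).
      by apply: congr1; apply/funext => s; rewrite muleCA.
    rewrite ge0_iterintZl ?EFin_indic_ge0 //.
    - by rewrite iterint_box_indicB_tshift muleC.
    - apply: emeasurable_funM; first exact: measurable_box_ind.
      exact: (measurableT_comp mIB
        (measurableT_comp (@measurable_tshift2 R d) (pair2_measurable t))).
    - by move=> s; apply: mule_ge0; [exact: box_ind_ge0|exact: EFin_indic_ge0].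
  by rewrite ge0_iterintZl ?volT_ge0.
by rewrite -lhs -rhs; exact: iterint_swap.
Qed.

Lemma volT_null_or_full : (forall c, defect c = 0) ->
  volT B = 0 \/ volT B = volT (@box R d).
Proof.
move=> /volTM_box_of_defect0; rewrite volT_box.
have : volT B <= (tau ^+ d)%:E.
  by rewrite -volT_box; apply: le_volT => //; exact: measurable_box.
have := volT_ge0 B; case: (volT B) => [v||] //; rewrite ?lee_fin => v0 vtau.
move=> /eqP; rewrite -!EFinM eqe -subr_eq0 -mulrBr mulf_eq0 subr_eq0.
by case/orP => /eqP ->; [left|right].
Qed.

End defect.

End torus.

Section sandwich.
Variables (R : realType) (d : nat) (M : set 'rV[R]_d) (B1 B2 : set (d.-tuple R)).
Local Notation rt := (@row2tuple R d).
Local Notation torus := (@torus R d).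
Hypotheses (MT : M `<=` torus) (mB1 : measurable B1) (mB2 : measurable B2)
  (B1M : rt @^-1` B1 `<=` M) (MB2 : M `<=` rt @^-1` B2) (B21 : volT (B2 `\` B1) = 0%E).
Local Open Scope ereal_scope.

Let B := B1 `&` box.
Let B' := B2 `&` box.

Let mB : measurable B. Proof. by apply: measurableI => //; exact: measurable_box. Qed.
Let mB' : measurable B'. Proof. by apply: measurableI => //; exact: measurable_box. Qed.
Let mB'B : measurable (B' `\` B). Proof. exact: measurableD. Qed.
Let Bbox : B `<=` box. Proof. by move=> t []. Qed.

Let BB' : B `<=` B'.
Proof.
move=> t [B1t bt]; split => //.
have /MB2 : M (tuple2row t) by apply: B1M; rewrite /= tuple2rowK.
by rewrite /= tuple2rowK.
Qed.

Let null_B'B : volT (B' `\` B) = 0.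
Proof.
apply/le_anti/andP; split; last exact: volT_ge0.
rewrite -B21; apply: le_volT; try exact: measurableD.
by move=> t [[B2t bt] nBt]; split => // B1t; apply: nBt.
Qed.

Let null_tshift c : volT (box `&` tshift c @^-1` (B' `\` B)) = 0.
Proof. by rewrite volT_box_preimage_tshift // setIidr ?null_B'B // => t [[]]. Qed.

Lemma leb_volT : leb M = volT B.
Proof.
apply: (leb_sandwich (Q := B')) => //.
- by move=> x [B1x _]; exact: B1M.
- by move=> x Mx; split; [exact: MB2|exact/torus_box/MT].
Qed.

Let DB' c := B `\` tshift (rt c) @^-1` B'.

Let rt_DB' a : rt @^-1` DB' (- a) `<=` M `\` translate M a.
Proof.
move=> x [[B1x _] nB'x]; split; first exact: B1M.
move/(translateE _ _ MT) => [_ [m Mm e]]; apply: nB'x; rewrite /= e.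
by split; [exact: MB2|exact/torus_box/MT].
Qed.

Let rt_B'D a : M `\` translate M a `<=` rt @^-1` (B' `\` tshift (rt (- a)) @^-1` B).
Proof.
move=> x [Mx nT]; split; first by split; [exact: MB2|exact/torus_box/MT].
move=> [B1W _]; apply: nT; apply/(translateE _ _ MT); split; first exact/torus_box/MT.
by exists (tuple2row (tshift (rt (- a)) (rt x)));
  rewrite ?tuple2rowK //; apply: B1M; rewrite /= tuple2rowK.
Qed.

(* The two approximations of M \ (M + a) differ by a subset of
   (B' \ B) `|` (box `&` tshift c @^-1` (B' \ B)), a null set. *)
Lemma Lambda_defect a : Lambda M a = defect B (- a).
Proof.
set c := rt (- a); set N := box `&` tshift c @^-1` (B' `\` B).
have mW E : measurable E -> measurable (tshift c @^-1` E).
  exact: measurable_preimage_tshift.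
have mN : measurable N by apply: measurableI; [exact: measurable_box|exact: mW].
have mDB' : measurable (DB' (- a)) by apply: measurableD => //; exact: mW.
have mQ : measurable (B' `\` tshift c @^-1` B) by apply: measurableD => //; exact: mW.
rewrite /Lambda (leb_sandwich mDB' mQ (@rt_DB' a) (@rt_B'D a)); last first.
  apply/le_anti/andP; split; last exact: volT_ge0.
  rewrite -null_B'B; apply: (le_volT_null _ _ mN); rewrite ?null_tshift //.
  - exact: measurableD.
  move=> t [[B't nWBt] nDt]; have [Bt|nBt] := pselect (B t); last by left.
  right; split; first exact: Bbox.
  by split => //; apply: contrapT => nB'W; apply: nDt.
apply/le_anti/andP; split.
  apply: le_volT => //; first by apply: measurableD => //; exact: mW.
  by move=> t [Bt nB'W]; split => // /BB'.
apply: (le_volT_null _ _ mN _ (null_tshift c)) => //.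
  by apply: measurableD => //; exact: mW.
move=> t [Bt nBW]; have [B'W|nB'W] := pselect (B' (tshift c t)); last by left.
by right; split; [exact: Bbox|].
Qed.

Lemma irrelevantE a : irrelevant M a <-> forall k : R, defect B (k *: a) = 0.
Proof.
split => h k; last by rewrite /irrelevant Lambda_defect -scaleNr h.
by have := h (- k)%R; rewrite Lambda_defect scaleNr opprK.
Qed.

Lemma irrelevant0 : irrelevant M 0.
Proof. by apply/irrelevantE => k; rewrite scaler0 defect0. Qed.

Lemma irrelevantD a b : irrelevant M a -> irrelevant M b -> irrelevant M (a + b).
Proof.
move=> /irrelevantE Ha /irrelevantE Hb; apply/irrelevantE => k.
apply/le_anti/andP; split; last exact: defect_ge0.
by rewrite -(adde0 0) -{1}(Ha k) -(Hb k) scalerDr; exact: defectD.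
Qed.

Lemma irrelevantZ c a : irrelevant M a -> irrelevant M (c *: a).
Proof. by move=> /irrelevantE Ha; apply/irrelevantE => k; rewrite scalerA. Qed.

Lemma leb_null_or_full : (forall a, irrelevant M a) -> leb M = 0 \/ leb M = leb torus.
Proof.
move=> irr; rewrite leb_volT leb_torus -volT_box; apply: volT_null_or_full => // c.
by have /irrelevantE/(_ 1%R) := irr c; rewrite scale1r.
Qed.

End sandwich.

Lemma row_unitv_ind (R : realType) (d : nat) (P : 'rV[R]_d -> Prop) :
  P 0 -> (forall a b, P a -> P b -> P (a + b)) ->
  (forall (c : R) a, P a -> P (c *: a)) -> (forall i, P (unitv R i)) ->
  forall a, P a.
Proof.
move=> P0 PD PZ Pe a; rewrite (row_sum_delta a).
by apply: (big_ind P) => // i _; apply: PZ; exact: Pe.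
Qed.

Theorem mainTheorem4 (R : realType) (d : nat) (M : set 'rV[R]_d)
    (HMT : M `<=` @torus R d) (HMmeas : leb_measurable M) :
  ((irrelevant M 0
    /\ (forall a b : 'rV[R]_d,
          irrelevant M a -> irrelevant M b -> irrelevant M (a + b))
    /\ (forall (c : R) (a : 'rV[R]_d), irrelevant M a -> irrelevant M (c *: a)))
  /\ ((0 < leb M)%E -> (leb M < leb (@torus R d))%E ->
      exists i : 'I_d, ~ irrelevant M (@unitv R d i))).
Proof.
have [B1 [B2 [mB1 mB2 B1M MB2 B21]]] := HMmeas.
have irr0 := irrelevant0 HMT mB1 mB2 B1M MB2 B21.
have irrD := irrelevantD HMT mB1 mB2 B1M MB2 B21.
have irrZ := irrelevantZ HMT mB1 mB2 B1M MB2 B21.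
split; first by [].
move=> M_gt0 M_lt_torus; apply: contrapT => no_relevant_unitv.
have irr : forall a, irrelevant M a.
  apply: row_unitv_ind => // i; apply: contrapT => relevant_i.
  by apply: no_relevant_unitv; exists i.
have [M0|Mfull] := leb_null_or_full HMT mB1 mB2 B1M MB2 B21 irr.
  by move: M_gt0; rewrite M0 ltxx.
by move: M_lt_torus; rewrite Mfull ltxx.
Qed.
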